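(* Let $S=(\mathcal R,\Gamma\Rightarrow x:A)$ be quasi-tree-like, let $\mathcal B\in\mathsf{BIGL}$ and let $\mathcal I$ be an interpretation of $S$ into $\mathcal B$ with $\mathcal B,\mathcal I\not\models S$. Then for any instance of a rule of $\mathsf{labIK4}$ other than thinning whose conclusion is $S$, there is a premiss $S'$ of that instance and an interpretation $\mathcal I'$ of $S'$ into $\mathcal B$ such that $\mathcal B,\mathcal I'\not\models S'$ and $\mathcal I'(z)\ge\mathcal I(z)$ for all $z\in\mathrm{Var}(S)$.
   Context: Modal formulas: $A ::= p \mid \bot \mid A\wedge A \mid A \vee A \mid A \to A \mid \Box A \mid \Diamond A$. Labelled sequents $\mathcal R,\Gamma\Rightarrow\Delta$: $\mathcal R$ a set of relational atoms $xRy$, $\Gamma,\Delta$ multisets of labelled formulas $x:A$; $\mathrm{Var}$ = labels occurring. $\mathsf{labK4}$ rules (premisses / conclusion): id $\mathcal R,x:p\Rightarrow x:p$; $\bot$L $\mathcal R,x:\bot,\Gamma\Rightarrow\Delta$; cut: $\mathcal R,\Gamma\Rightarrow\Delta,x:A$ and $\mathcal R,\Gamma',x:A\Rightarrow\Delta'$ / $\mathcal R,\Gamma,\Gamma'\Rightarrow\Delta,\Delta'$; left/right weakening and contraction; thinning $\mathcal R,\Gamma\Rightarrow\Delta$ / $\mathcal R,\mathcal R',\Gamma\Rightarrow\Delta$; $\to$L: $\mathcal R,\Gamma\Rightarrow\Delta,x:A$ and $\mathcal R,\Gamma',x:B\Rightarrow\Delta'$ / $\mathcal R,\Gamma,\Gamma',x:A\to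 B\Rightarrow\Delta,\Delta'$; $\to$R: $\mathcal R,\Gamma,x:A\Rightarrow\Delta,x:B$ / $\mathcal R,\Gamma\Rightarrow\Delta,x:A\to B$; $\wedge$L: $\mathcal R,\Gamma,x:A_i\Rightarrow\Delta$ / $\mathcal R,\Gamma,x:A_0\wedge A_1\Rightarrow\Delta$; $\wedge$R: $\mathcal R,\Gamma\Rightarrow\Delta,x:A$ and $\mathcal R,\Gamma\Rightarrow\Delta,x:B$ / $\mathcal R,\Gamma\Rightarrow\Delta,x:A\wedge B$; $\vee$L: $\mathcal R,\Gamma,x:A\Rightarrow\Delta$ and $\mathcal R,\Gamma,x:B\Rightarrow\Delta$ / $\mathcal R,\Gamma,x:A\vee B\Rightarrow\Delta$; $\vee$R: $\mathcal R,\Gamma\Rightarrow\Delta,x:A_i$ / $\mathcal R,\Gamma\Rightarrow\Delta,x:A_0\vee A_1$; $\Diamond$L ($y$ fresh): $\mathcal R,xRy,\Gamma,y:A\Rightarrow\Delta$ / $\mathcal R,\Gamma,x:\Diamond A\Rightarrow\Delta$; $\Diamond$R: $\mathcal R,xRy,\Gamma\Rightarrow\Delta,y:A$ / $\mathcal R,xRy,\Gamma\Rightarrow\Delta,x:\Diamond A$; $\Box$R ($y$ fresh): $\mathcal R,xRy,\Gamma\Rightarrow\Delta,y:A$ / $\mathcal R,\Gamma\Rightarrow\Delta,x:\Box A$; $\Box$L: $\mathcal R,xRy,\Gamma,y:A\Rightarrow\Delta$ / $\mathcal R,xRy,\Gamma,x:\Box A\Rightarrow\Delta$; tr: $\mathcal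 R,xRy,yRz,xRz,\Gamma\Rightarrow\Delta$ / $\mathcal R,xRy,yRz,\Gamma\Rightarrow\Delta$. $\mathsf{labIK4}$: restriction to sequents with exactly one labelled formula on the right. Quasi-tree-like: $\mathcal R$ is a tree if some root $x_0\in\mathrm{Var}(\mathcal R)$ reaches each other label by a unique $R$-chain in $\mathcal R$; a quasi-tree if $\mathcal R_0\subseteq\mathcal R\subseteq\mathcal R_0^+$ for a tree $\mathcal R_0$; $\mathcal R,\Gamma\Rightarrow x:A$ is quasi-tree-like if either $\mathcal R=\emptyset$ and $\mathrm{Var}(\Gamma)\subseteq\{x\}$, or $\mathcal R$ is a quasi-tree containing all labels of $\Gamma$ and $x$. Birelational models $\mathcal B=(W,\le,R^{\mathcal B},V)$ with conditions (F1) $w\le w',wR^{\mathcal B}v\Rightarrow\exists v'(v\le v', w'R^{\mathcal B}v')$, (F2) $wR^{\mathcal B}v,v\le v'\Rightarrow\exists w'(w\le w',w'R^{\mathcal B}v')$, monotone $V$; satisfaction is intuitionistic for $\to$, $w\models\Box A$ iff for all $w'\ge w$ and $w'R^{\mathcal B}v$, $v\models A$; $w\models\Diamond A$ iff some $v$ with $wR^{\mathcal B}v$ satisfies $A$. $\mathsf{BIGL}$: $R^{\mathcal B}$ transitive and no infinite chain $x_1\le y_1R^{\mathcal B}x_2\le y_2R^{\mathcal B}\cdots$. An interpretation of a sequent $S$ into $\mathcal B$ is $\mathcal I:\mathrm{Var}(S)\to W$ with $\mathcal I(u)R^{\mathcal B}\mathcal I(v)$ whenever $uRv\in\mathcal R$;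 $\mathcal B,\mathcal I\models(\mathcal R,\Gamma\Rightarrow x:A)$ iff ($\mathcal B,\mathcal I(y)\models B$ for all $y:B\in\Gamma$) implies $\mathcal B,\mathcal I(x)\models A$. *)

From Stdlib Require Import List Relations Permutation.
Import ListNotations.

Inductive form : Type :=
| FVar : nat -> form
| FBot : form
| FAnd : form -> form -> form
| FOr  : form -> form -> form
| FImp : form -> form -> form
| FBox : form -> form
| FDia : form -> form.

(* A relational atom xRy is the pair (x,y).
   The set R of relational atoms is represented by a list (read as a set,
   via membership); the multiset Gamma by a list (read up to permutation).
   labIK4 sequents have exactly one labelled formula on the right. *)
Record sequent : Type := mkSeq {
  rel  : list (nat * nat);
  ant  : list (nat * form);
  slab : nat;
  sfor : form }.

Definition in_rel_labels (R : list (nat * nat)) (z : nat) : Prop :=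
  exists p, In p R /\ (fst p = z \/ snd p = z).

Definition in_var (S : sequent) (z : nat) : Prop :=
  in_rel_labels (rel S) z \/ (exists B, In (z, B) (ant S)) \/ slab S = z.

(* R-chains: a = c0 R c1 R ... R cn = b, with l = [c1; ...; cn]. *)
Fixpoint chain (R : list (nat * nat)) (a : nat) (l : list nat) (b : nat) : Prop :=
  match l with
  | [] => a = b
  | c :: l' => In (a, c) R /\ chain R c l' b
  end.

Definition is_tree (R0 : list (nat * nat)) : Prop :=
  exists x0, in_rel_labels R0 x0 /\
    forall y, in_rel_labels R0 y -> y <> x0 -> exists! l, chain R0 x0 l y.

Definition is_quasi_tree (R : list (nat * nat)) : Prop :=
  exists R0, is_tree R0 /\
    (forall p, In p R0 -> In p R) /\
    (forall a b, In (a, b) R -> clos_trans nat (fun u v => In (u, v) R0) a b).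

Definition quasi_tree_like (S : sequent) : Prop :=
  (rel S = [] /\ forall y B, In (y, B) (ant S) -> y = slab S)
  \/ (is_quasi_tree (rel S)
      /\ (forall y B, In (y, B) (ant S) -> in_rel_labels (rel S) y)
      /\ in_rel_labels (rel S) (slab S)).

Definition fresh (y : nat) (S : sequent) : Prop := ~ in_var S y.

(* Rule instances of labIK4 other than thinning: labIK4_rule prems concl.
   Multiset contexts are matched up to permutation; "R, xRy" in a conclusion
   (a set) is expressed by membership of xRy in R.
   Right weakening / right contraction have no instances in labIK4 (they would
   need a sequent with zero resp. two formulas on the right). *)
Inductive labIK4_rule : list sequent -> sequent -> Prop :=
| r_id : forall R x p G,
    Permutation G [(x, FVar p)] ->
    labIK4_rule [] (mkSeq R G x (FVar p))
| r_botL : forall R x G G0 z C,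
    Permutation G ((x, FBot) :: G0) ->
    labIK4_rule [] (mkSeq R G z C)
| r_cut : forall R G G1 G2 x A z C,
    Permutation G (G1 ++ G2) ->
    labIK4_rule [mkSeq R G1 x A; mkSeq R ((x, A) :: G2) z C] (mkSeq R G z C)
| r_wL : forall R G G0 x A z C,
    Permutation G ((x, A) :: G0) ->
    labIK4_rule [mkSeq R G0 z C] (mkSeq R G z C)
| r_cL : forall R G G0 x A z C,
    Permutation G ((x, A) :: G0) ->
    labIK4_rule [mkSeq R ((x, A) :: (x, A) :: G0) z C] (mkSeq R G z C)
| r_impL : forall R G G1 G2 x A B z C,
    Permutation G ((x, FImp A B) :: G1 ++ G2) ->
    labIK4_rule [mkSeq R G1 x A; mkSeq R ((x, B) :: G2) z C] (mkSeq R G z C)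
| r_impR : forall R G x A B,
    labIK4_rule [mkSeq R ((x, A) :: G) x B] (mkSeq R G x (FImp A B))
| r_andL0 : forall R G G0 x A0 A1 z C,
    Permutation G ((x, FAnd A0 A1) :: G0) ->
    labIK4_rule [mkSeq R ((x, A0) :: G0) z C] (mkSeq R G z C)
| r_andL1 : forall R G G0 x A0 A1 z C,
    Permutation G ((x, FAnd A0 A1) :: G0) ->
    labIK4_rule [mkSeq R ((x, A1) :: G0) z C] (mkSeq R G z C)
| r_andR : forall R G x A B,
    labIK4_rule [mkSeq R G x A; mkSeq R G x B] (mkSeq R G x (FAnd A B))
| r_orL : forall R G G0 x A B z C,
    Permutation G ((x, FOr A B) :: G0) ->
    labIK4_rule [mkSeq R ((x, A) :: G0) z C; mkSeq R ((x, B) :: G0) z C]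
                (mkSeq R G z C)
| r_orR0 : forall R G x A0 A1,
    labIK4_rule [mkSeq R G x A0] (mkSeq R G x (FOr A0 A1))
| r_orR1 : forall R G x A0 A1,
    labIK4_rule [mkSeq R G x A1] (mkSeq R G x (FOr A0 A1))
| r_diaL : forall R G G0 x y A z C,
    Permutation G ((x, FDia A) :: G0) ->
    fresh y (mkSeq R G z C) ->
    labIK4_rule [mkSeq ((x, y) :: R) ((y, A) :: G0) z C] (mkSeq R G z C)
| r_diaR : forall R G x y A,
    In (x, y) R ->
    labIK4_rule [mkSeq R G y A] (mkSeq R G x (FDia A))
| r_boxR : forall R G x y A,
    fresh y (mkSeq R G x (FBox A)) ->
    labIK4_rule [mkSeq ((x, y) :: R) G y A] (mkSeq R G x (FBox A))
| r_boxL : forall R G G0 x y A z C,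
    In (x, y) R ->
    Permutation G ((x, FBox A) :: G0) ->
    labIK4_rule [mkSeq R ((y, A) :: G0) z C] (mkSeq R G z C)
| r_tr : forall R G x y w z C,
    In (x, y) R -> In (y, w) R ->
    labIK4_rule [mkSeq ((x, w) :: R) G z C] (mkSeq R G z C).

Record model : Type := mkModel {
  W : Type;
  le : W -> W -> Prop;
  Rm : W -> W -> Prop;
  V : nat -> W -> Prop;
  le_refl : forall w, le w w;
  le_trans : forall u v w, le u v -> le v w -> le u w;
  F1 : forall w w' v, le w w' -> Rm w v -> exists v', le v v' /\ Rm w' v';
  F2 : forall w v v', Rm w v -> le v v' -> exists w', le w w' /\ Rm w' v';
  V_mono : forall p w w', le w w' -> V p w -> V p w' }.

Fixpoint sat (M : model) (w : W M) (A : form) : Prop :=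
  match A with
  | FVar p => V M p w
  | FBot => False
  | FAnd A B => sat M w A /\ sat M w B
  | FOr A B => sat M w A \/ sat M w B
  | FImp A B => forall w', le M w w' -> sat M w' A -> sat M w' B
  | FBox A => forall w' v, le M w w' -> Rm M w' v -> sat M v A
  | FDia A => exists v, Rm M w v /\ sat M v A
  end.

Definition BIGL (M : model) : Prop :=
  (forall u v w, Rm M u v -> Rm M v w -> Rm M u w) /\
  ~ (exists (xs ys : nat -> W M),
       forall n, le M (xs n) (ys n) /\ Rm M (ys n) (xs (S n))).

(* Interpretations are total maps on labels; only their values on Var(S)
   matter. *)
Definition interpretation (M : model) (S : sequent) (I : nat -> W M) : Prop :=
  forall u v, In (u, v) (rel S) -> Rm M (I u) (I v).

Definition sat_seq (M : model) (I : nat -> W M) (S : sequent) : Prop :=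
  (forall y B, In (y, B) (ant S) -> sat M (I y) B) -> sat M (I (slab S)) (sfor S).

From Stdlib Require Import List Relations Permutation PeanoNat Classical ClassicalEpsilon.
Import ListNotations.

(* Most rules keep I; diamond-left sends its fresh label to a witness
   of the diamond; implication-right and box-right must first move x up to a
   world w' >= I(x) refuting the principal formula.

   This last step is the heart of the proof: the lifting lemma
   [lift_quasi_tree_like].  On a tree, the ancestors of x are moved up by (F2)
   and the subtree below x is pushed forward from w' by (F1), by induction on
   the chain from the root to x ([reroot], [lift_in_tree]).  A quasi-tree lies
   between a tree and its transitive closure, so transitivity of R^B in BIGL
   models transfers the lifted interpretation to it; the absence of infinite
   <=;R-chains makes R^B irreflexive, which gives uniqueness of chains back to
   the root. *)

Definition interprets (M : model) (R : list (nat * nat)) (J : nat -> W M) : Prop :=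
  forall u v, In (u, v) R -> Rm M (J u) (J v).

Section ModelFacts.
Variable M : model.

Lemma sat_persist (A : form) (w w' : W M) : le M w w' -> sat M w A -> sat M w' A.
Proof.
  revert w w'; induction A; simpl; intros w w' Hle H.
  - exact (V_mono M _ _ _ Hle H).
  - exact H.
  - destruct H; split; eauto.
  - destruct H; [left | right]; eauto.
  - intros u Hu; apply H, (le_trans M _ _ _ Hle Hu).
  - intros u v Hu; apply H, (le_trans M _ _ _ Hle Hu).
  - destruct H as [v [Hv HA]].
    destruct (F1 M _ _ _ Hle Hv) as [v' [Hvv' Hv']].
    exists v'; split; eauto.
Qed.

(* A reflexive R^B-edge would give an infinite chain w <= w R w <= w R ...,
   which BIGL models forbid. *)
Lemma BIGL_irreflexive : BIGL M -> forall w, ~ Rm M w w.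
Proof.
  intros [_ Hnochain] w Hw. apply Hnochain.
  exists (fun _ => w), (fun _ => w). intro n; split; [apply le_refl | exact Hw].
Qed.

End ModelFacts.

Section Chains.
Variable R : list (nat * nat).

Fixpoint chain_end (a : nat) (l : list nat) : nat :=
  match l with [] => a | c :: l' => chain_end c l' end.

Lemma chain_end_eq a l b : chain R a l b -> chain_end a l = b.
Proof. revert a; induction l; simpl; intros a' H; [exact H | exact (IHl _ (proj2 H))]. Qed.

Lemma chain_app a l1 m l2 b : chain R a l1 m -> chain R m l2 b -> chain R a (l1 ++ l2) b.
Proof.
  revert a; induction l1 as [|c l1 IH]; simpl; intros a' H1 H2; [subst; exact H2|].
  destruct H1; split; eauto.
Qed.

Lemma chain_app_inv a l1 l2 b :
  chain R a (l1 ++ l2) b -> chain R a l1 (chain_end a l1) /\ chain R (chain_end a l1) l2 b.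
Proof.
  revert a; induction l1 as [|c l1 IH]; simpl; intros a' H; [auto|].
  destruct H as [Hac H]. destruct (IH _ H). auto.
Qed.

Lemma chain_end_label a c l b : chain R a (c :: l) b -> in_rel_labels R b.
Proof.
  revert a c; induction l as [|d l IH]; simpl; intros a' c [Hac H].
  - subst. exists (a', b); simpl; auto.
  - eauto.
Qed.

Lemma chain_Rm (M : model) (J : nat -> W M) :
  interprets M R J -> (forall u v w, Rm M u v -> Rm M v w -> Rm M u w) ->
  forall l a c b, chain R a (c :: l) b -> Rm M (J a) (J b).
Proof.
  intros HJ Htr; induction l as [|d l IH]; simpl; intros a c b [Hac H].
  - subst; exact (HJ _ _ Hac).
  - exact (Htr _ _ _ (HJ _ _ Hac) (IH _ _ _ H)).
Qed.

End Chains.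

Section TreeLifting.
Variables (M : model) (R0 : list (nat * nat)) (x0 : nat) (I : nat -> W M).
Hypothesis I_R0 : interprets M R0 I.
Hypothesis root_reaches : forall z, in_rel_labels R0 z -> exists l, chain R0 x0 l z.
Hypothesis root_chain_unique :
  forall z l1 l2, chain R0 x0 l1 z -> chain R0 x0 l2 z -> l1 = l2.

Lemma chain_to_parent u v lv :
  In (u, v) R0 -> chain R0 x0 lv v -> exists lu, lv = lu ++ [v] /\ chain R0 x0 lu u.
Proof.
  intros Huv Hlv.
  destruct (root_reaches u) as [lu Hlu]; [exists (u, v); simpl; auto|].
  exists lu; split; [|exact Hlu].
  apply (root_chain_unique v); [exact Hlv|].
  apply chain_app with u; simpl; auto.
Qed.

Lemma root_no_parent u : ~ In (u, x0) R0.
Proof.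
  intro Hu. destruct (chain_to_parent u x0 [] Hu eq_refl) as [lu [E _]].
  exact (app_cons_not_nil lu [] x0 E).
Qed.

(* Forward step along (F1): given o <= n and o R v, a world above v that is an
   R^B-successor of n. *)
Definition succ_above (n v : W M) : W M :=
  epsilon (inhabits v) (fun v' => le M v v' /\ Rm M n v').

Lemma succ_above_spec o n v :
  le M o n -> Rm M o v -> le M v (succ_above n v) /\ Rm M n (succ_above n v).
Proof. intros Hon Hov. unfold succ_above; apply epsilon_spec, (F1 M _ _ _ Hon Hov). Qed.

Fixpoint push (n : W M) (l : list nat) : W M :=
  match l with [] => n | c :: l' => push (succ_above n (I c)) l' end.

Lemma push_snoc n l c : push n (l ++ [c]) = succ_above (push n l) (I c).
Proof. revert n; induction l; simpl; auto. Qed.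

Lemma push_above a n l b : chain R0 a l b -> le M (I a) n -> le M (I b) (push n l).
Proof.
  revert a n; induction l as [|c l IH]; simpl; intros a n Hl Hle; [subst; exact Hle|].
  destruct Hl as [Hac Hl]. apply (IH c _ Hl), (succ_above_spec (I a)); auto.
Qed.

Section Reroot.
Variables (y : nat) (ly : list nat).
Hypothesis ly_chain : chain R0 x0 ly y.

Definition below (z : nat) : Prop := exists l, chain R0 y l z.

Lemma below_chain_unique z l1 l2 : chain R0 y l1 z -> chain R0 y l2 z -> l1 = l2.
Proof.
  intros H1 H2. apply app_inv_head with ly.
  apply (root_chain_unique z); eapply chain_app; eauto.
Qed.

Lemma edge_into_below u v : In (u, v) R0 -> below v -> ~ below u -> v = y.
Proof.
  intros Huv [lv Hlv] Hnu.
  destruct lv as [|c lv _] using rev_ind; [symmetry; exact Hlv|].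
  exfalso; apply Hnu.
  assert (Hroot : chain R0 x0 (ly ++ lv ++ [c]) v) by (eapply chain_app; eauto).
  destruct (chain_to_parent u v _ Huv Hroot) as [lu [E Hlu]].
  rewrite app_assoc in E. apply app_inj_tail in E as [<- _].
  apply chain_app_inv in Hlu as [Hly Hlv'].
  rewrite (chain_end_eq _ _ _ _ ly_chain) in Hlv'. exists lv; exact Hlv'.
Qed.

(* Re-rooting: if I1 >= I interprets R0 and every parent of y is sent by I1
   below w' >= I(y), then the subtree below y can be pushed forward from w',
   the rest of the tree keeping its I1-values. *)
Lemma reroot (w' : W M) (I1 : nat -> W M) :
  le M (I y) w' -> (forall z, le M (I z) (I1 z)) -> interprets M R0 I1 ->
  (forall u, In (u, y) R0 -> Rm M (I1 u) w') ->
  exists I2, (forall z, le M (I z) (I2 z)) /\ I2 y = w' /\ interprets M R0 I2.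
Proof.
  intros Hw H1le H1R Hparent.
  set (J := fun z => if excluded_middle_informative (below z)
                     then push w' (epsilon (inhabits []) (fun l => chain R0 y l z))
                     else I1 z).
  assert (J_below : forall z l, chain R0 y l z -> J z = push w' l).
  { intros z l Hl. unfold J.
    destruct excluded_middle_informative as [_ | Hn]; [| exfalso; apply Hn; exists l; exact Hl].
    f_equal. apply (below_chain_unique z); [| exact Hl].
    apply epsilon_spec; exists l; exact Hl. }
  assert (J_other : forall z, ~ below z -> J z = I1 z).
  { intros z Hz; unfold J; destruct excluded_middle_informative; tauto. }
  assert (J_y : J y = w') by exact (J_below y [] eq_refl).
  exists J; split; [| split; [exact J_y |]].
  - intro z. destruct (classic (below z)) as [[l Hl] | Hn].
    + rewrite (J_below _ _ Hl). exact (push_above _ _ _ _ Hl Hw).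
    + rewrite (J_other _ Hn). apply H1le.
  - intros u v Huv. destruct (classic (below u)) as [[lu Hlu] | Hnu].
    + assert (Hlv : chain R0 y (lu ++ [v]) v) by (apply chain_app with u; simpl; auto).
      rewrite (J_below _ _ Hlv), (J_below _ _ Hlu), push_snoc.
      apply (succ_above_spec (I u)); [exact (push_above _ _ _ _ Hlu Hw) | exact (I_R0 _ _ Huv)].
    + rewrite (J_other _ Hnu). destruct (classic (below v)) as [Hv | Hnv].
      * assert (v = y) as -> by exact (edge_into_below u v Huv Hv Hnu).
        rewrite J_y. exact (Hparent _ Huv).
      * rewrite (J_other _ Hnv). exact (H1R _ _ Huv).
Qed.

End Reroot.

(* Lifting at y, by induction on the chain from the root: the parent a of y is
   first lifted to some a' with a' R w' (by (F2)), then the subtree below y is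
   re-rooted at w'. *)
Lemma lift_in_tree l y w' :
  chain R0 x0 l y -> le M (I y) w' ->
  exists I', (forall z, le M (I z) (I' z)) /\ I' y = w' /\ interprets M R0 I'.
Proof.
  revert y w'; induction l as [|c l IH] using rev_ind; intros y w' Hl Hw.
  - simpl in Hl; subst y.
    apply (reroot x0 [] eq_refl w' I Hw); [intro; apply le_refl | exact I_R0 |].
    intros u Hu; destruct (root_no_parent u Hu).
  - pose proof Hl as Hly.
    apply chain_app_inv in Hl as [Ha [Hay Hcy]]; simpl in Hcy; subst c.
    destruct (F2 M _ _ _ (I_R0 _ _ Hay) Hw) as [a' [Ha' Ra']].
    destruct (IH _ a' Ha Ha') as [I1 [H1le [H1a H1R]]].
    apply (reroot y (l ++ [y]) Hly w' I1 Hw H1le H1R).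
    intros u Hu. destruct (chain_to_parent u y (l ++ [y]) Hu Hly) as [lu [E Hlu]].
    apply app_inj_tail in E as [<- _].
    rewrite <- (chain_end_eq _ _ _ _ Hlu), H1a. exact Ra'.
Qed.

End TreeLifting.

Lemma clos_trans_labels (R0 : list (nat * nat)) a b :
  clos_trans nat (fun u v => In (u, v) R0) a b -> in_rel_labels R0 a /\ in_rel_labels R0 b.
Proof.
  induction 1 as [a b H | a b c _ [Ha _] _ [_ Hc]]; [| auto].
  split; exists (a, b); simpl; auto.
Qed.

Lemma clos_trans_Rm (M : model) (R0 : list (nat * nat)) (J : nat -> W M) :
  interprets M R0 J -> (forall u v w, Rm M u v -> Rm M v w -> Rm M u w) ->
  forall a b, clos_trans nat (fun u v => In (u, v) R0) a b -> Rm M (J a) (J b).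
Proof. intros HJ Htr a b; induction 1; eauto. Qed.

(* In a tree interpreted into a BIGL model, chains from the root are unique:
   the definition of trees gives this away from the root, and a nonempty
   chain from the root back to itself would yield a reflexive R^B-edge. *)
Lemma tree_root (M : model) (R0 : list (nat * nat)) (I : nat -> W M) :
  BIGL M -> interprets M R0 I -> is_tree R0 ->
  exists x0, (forall z, in_rel_labels R0 z -> exists l, chain R0 x0 l z) /\
             (forall z l1 l2, chain R0 x0 l1 z -> chain R0 x0 l2 z -> l1 = l2).
Proof.
  intros HB HI [x0 [_ Hroot]]. exists x0; split.
  - intros z Hz. destruct (Nat.eq_dec z x0) as [-> | Hne]; [exists []; reflexivity |].
    destruct (Hroot z Hz Hne) as [l [Hl _]]; eauto.
  - assert (Hloop : forall l, chain R0 x0 l x0 -> l = []).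
    { intros [|c l] H; [reflexivity | exfalso].
      exact (BIGL_irreflexive M HB _ (chain_Rm _ M I HI (proj1 HB) l x0 c x0 H)). }
    intros z l1 l2 H1 H2. destruct (Nat.eq_dec z x0) as [-> | Hne].
    + rewrite (Hloop _ H1), (Hloop _ H2); reflexivity.
    + destruct l1 as [|c l1]; [simpl in H1; congruence |].
      destruct (Hroot z (chain_end_label _ _ _ _ _ H1) Hne) as [l0 [_ Hu]].
      rewrite <- (Hu _ H1). exact (Hu _ H2).
Qed.

Lemma lift_quasi_tree_like (M : model) (S : sequent) (I : nat -> W M) (w' : W M) :
  quasi_tree_like S -> BIGL M -> interpretation M S I -> le M (I (slab S)) w' ->
  exists I', (forall z, le M (I z) (I' z)) /\ I' (slab S) = w' /\ interpretation M S I'.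
Proof.
  intros Hq HB HI Hw.
  destruct Hq as [[HR _] | [[R0 [Htree [Hsub Hct]]] [_ Hx]]].
  - exists (fun z => if Nat.eq_dec z (slab S) then w' else I z). split; [| split].
    + intro z. destruct Nat.eq_dec as [-> | _]; [exact Hw | apply le_refl].
    + destruct Nat.eq_dec; congruence.
    + intros u v H. rewrite HR in H. destruct H.
  - assert (HI0 : interprets M R0 I) by (intros u v H; exact (HI _ _ (Hsub _ H))).
    destruct (tree_root M R0 I HB HI0 Htree) as [x0 [Hreach Huniq]].
    assert (Hx0 : in_rel_labels R0 (slab S)).
    { destruct Hx as [[a b] [Hab Hends]].
      destruct (clos_trans_labels R0 a b (Hct _ _ Hab)).
      simpl in Hends; destruct Hends as [<- | <-]; assumption. }
    destruct (Hreach _ Hx0) as [lx Hlx].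
    destruct (lift_in_tree M R0 x0 I HI0 Hreach Huniq lx (slab S) w' Hlx Hw)
      as [I' [Hle [Hx' HR0]]].
    exists I'; split; [exact Hle | split; [exact Hx' |]].
    intros u v H. exact (clos_trans_Rm M R0 I' HR0 (proj1 HB) u v (Hct _ _ H)).
Qed.

Definition sat_ctx (M : model) (J : nat -> W M) (G : list (nat * form)) : Prop :=
  forall y B, In (y, B) G -> sat M (J y) B.

Section Contexts.
Variables (M : model) (J : nat -> W M).

Lemma sat_ctx_incl G G' : incl G' G -> sat_ctx M J G -> sat_ctx M J G'.
Proof. intros Hincl HG y B H; exact (HG y B (Hincl _ H)). Qed.

Lemma sat_ctx_perm G G' : Permutation G G' -> sat_ctx M J G -> sat_ctx M J G'.
Proof. intro Hp; apply sat_ctx_incl; intros a; apply Permutation_in, Permutation_sym, Hp. Qed.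

Lemma sat_ctx_cons x A G : sat_ctx M J ((x, A) :: G) <-> sat M (J x) A /\ sat_ctx M J G.
Proof.
  split.
  - intro H; split; [apply H; left; reflexivity | intros y B HyB; apply H; right; exact HyB].
  - intros [HA HG] y B [E | HyB]; [injection E as <- <-; exact HA | exact (HG _ _ HyB)].
Qed.

Lemma sat_ctx_app G1 G2 : sat_ctx M J (G1 ++ G2) <-> sat_ctx M J G1 /\ sat_ctx M J G2.
Proof.
  split.
  - intro H; split; intros y B HyB; apply H, in_or_app; auto.
  - intros [H1 H2] y B HyB; apply in_app_or in HyB as [HyB | HyB]; auto.
Qed.

Lemma sat_ctx_persist (J' : nat -> W M) G :
  (forall z, le M (J z) (J' z)) -> sat_ctx M J G -> sat_ctx M J' G.
Proof. intros Hle HG y B HyB; exact (sat_persist M B _ _ (Hle y) (HG _ _ HyB)). Qed.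

End Contexts.

Definition update (M : model) (J : nat -> W M) (y : nat) (v : W M) : nat -> W M :=
  fun u => if Nat.eq_dec u y then v else J u.

Lemma update_eq (M : model) J y (v : W M) : update M J y v y = v.
Proof. unfold update; destruct Nat.eq_dec; congruence. Qed.

Lemma update_fresh (M : model) J y (v : W M) S u :
  fresh y S -> in_var S u -> update M J y v u = J u.
Proof.
  intros Hy Hu; unfold update.
  destruct Nat.eq_dec as [-> |]; [contradiction | reflexivity].
Qed.

Lemma sat_ctx_update_fresh (M : model) J y (v : W M) S :
  fresh y S -> sat_ctx M J (ant S) -> sat_ctx M (update M J y v) (ant S).
Proof.
  intros Hy HG u B HuB. rewrite (update_fresh M J y v S u Hy); [exact (HG _ _ HuB) |].
  right; left; exists B; exact HuB.
Qed.

Lemma interprets_update_fresh (M : model) J y (v : W M) S x :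
  fresh y S -> in_var S x -> interpretation M S J -> Rm M (J x) v ->
  interprets M ((x, y) :: rel S) (update M J y v).
Proof.
  intros Hy Hx HJ Hv a b [E | Hab].
  - injection E as <- <-. rewrite update_eq, (update_fresh M J y v S x Hy Hx). exact Hv.
  - rewrite (update_fresh M J y v S a Hy), (update_fresh M J y v S b Hy)
      by (left; exists (a, b); simpl; auto).
    exact (HJ _ _ Hab).
Qed.

Lemma refute_imp (M : model) w A B :
  ~ sat M w (FImp A B) -> exists w', le M w w' /\ sat M w' A /\ ~ sat M w' B.
Proof.
  intro Hn; apply NNPP; intro Hno; apply Hn; simpl; intros w' Hw HA.
  apply NNPP; intro HB; apply Hno; eauto.
Qed.

Lemma refute_box (M : model) w A :
  ~ sat M w (FBox A) -> exists w' v, le M w w' /\ Rm M w' v /\ ~ sat M v A.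
Proof.
  intro Hn; apply NNPP; intro Hno; apply Hn; simpl; intros w' v Hw Hv.
  apply NNPP; intro HA; apply Hno; eauto.
Qed.

Definition countermodel (M : model) (J : nat -> W M) (S : sequent) : Prop :=
  interpretation M S J /\ sat_ctx M J (ant S) /\ ~ sat M (J (slab S)) (sfor S).

Lemma countermodel_of_refutation (M : model) J S :
  interpretation M S J -> ~ sat_seq M J S -> countermodel M J S.
Proof.
  intros HJ Hn; split; [exact HJ | split].
  - intros y B HyB; apply NNPP; intro HnB; apply Hn; intro H; exfalso; eauto.
  - intro H; apply Hn; intro; exact H.
Qed.

Section RuleCases.
Variables (M : model) (I : nat -> W M).

Definition premiss_refuted (S : sequent) (prems : list sequent) : Prop :=
  exists S' I', In S' prems /\ countermodel M I' S' /\
                (forall z, in_var S z -> le M (I z) (I' z)).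

Lemma refuted_unchanged S S' prems :
  In S' prems -> interpretation M S' I -> sat_ctx M I (ant S') ->
  ~ sat M (I (slab S')) (sfor S') -> premiss_refuted S prems.
Proof. intros Hin HI HG Hn. exists S', I; repeat split; auto. intros; apply le_refl. Qed.

Lemma id_valid R x p G :
  Permutation G [(x, FVar p)] -> ~ countermodel M I (mkSeq R G x (FVar p)).
Proof. intros Hp [_ [HG Hn]]. apply (sat_ctx_perm M I _ _ Hp), sat_ctx_cons in HG. tauto. Qed.

Lemma botL_valid R x G G0 z C :
  Permutation G ((x, FBot) :: G0) -> ~ countermodel M I (mkSeq R G z C).
Proof. intros Hp [_ [HG _]]. apply (sat_ctx_perm M I _ _ Hp), sat_ctx_cons in HG. tauto. Qed.

Lemma cut_case R G G1 G2 x A z C :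
  Permutation G (G1 ++ G2) -> countermodel M I (mkSeq R G z C) ->
  premiss_refuted (mkSeq R G z C) [mkSeq R G1 x A; mkSeq R ((x, A) :: G2) z C].
Proof.
  intros Hp [HI [HG Hn]]. apply (sat_ctx_perm M I _ _ Hp), sat_ctx_app in HG as [HG1 HG2].
  destruct (classic (sat M (I x) A)) as [HA | HnA].
  - apply (refuted_unchanged _ (mkSeq R ((x, A) :: G2) z C)); simpl; auto.
    apply sat_ctx_cons; auto.
  - apply (refuted_unchanged _ (mkSeq R G1 x A)); simpl; auto.
Qed.

Lemma wL_case R G G0 x A z C :
  Permutation G ((x, A) :: G0) -> countermodel M I (mkSeq R G z C) ->
  premiss_refuted (mkSeq R G z C) [mkSeq R G0 z C].
Proof.
  intros Hp [HI [HG Hn]]. apply (sat_ctx_perm M I _ _ Hp), sat_ctx_cons in HG as [_ HG0].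
  apply (refuted_unchanged _ (mkSeq R G0 z C)); simpl; auto.
Qed.

Lemma cL_case R G G0 x A z C :
  Permutation G ((x, A) :: G0) -> countermodel M I (mkSeq R G z C) ->
  premiss_refuted (mkSeq R G z C) [mkSeq R ((x, A) :: (x, A) :: G0) z C].
Proof.
  intros Hp [HI [HG Hn]]. apply (sat_ctx_perm M I _ _ Hp), sat_ctx_cons in HG as [HA HG0].
  apply (refuted_unchanged _ (mkSeq R ((x, A) :: (x, A) :: G0) z C)); simpl; auto.
  repeat (apply sat_ctx_cons; split; auto).
Qed.

Lemma impL_case R G G1 G2 x A B z C :
  Permutation G ((x, FImp A B) :: G1 ++ G2) -> countermodel M I (mkSeq R G z C) ->
  premiss_refuted (mkSeq R G z C) [mkSeq R G1 x A; mkSeq R ((x, B) :: G2) z C].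
Proof.
  intros Hp [HI [HG Hn]].
  apply (sat_ctx_perm M I _ _ Hp), sat_ctx_cons in HG as [HAB HG12].
  apply sat_ctx_app in HG12 as [HG1 HG2].
  destruct (classic (sat M (I x) A)) as [HA | HnA].
  - apply (refuted_unchanged _ (mkSeq R ((x, B) :: G2) z C)); simpl; auto.
    apply sat_ctx_cons; split; [exact (HAB _ (le_refl M _) HA) | exact HG2].
  - apply (refuted_unchanged _ (mkSeq R G1 x A)); simpl; auto.
Qed.

Lemma andL_case R G G0 x A0 A1 A z C :
  Permutation G ((x, FAnd A0 A1) :: G0) -> A = A0 \/ A = A1 ->
  countermodel M I (mkSeq R G z C) ->
  premiss_refuted (mkSeq R G z C) [mkSeq R ((x, A) :: G0) z C].
Proof.
  intros Hp HA [HI [HG Hn]]. apply (sat_ctx_perm M I _ _ Hp), sat_ctx_cons in HG as [[H0 H1] HG0].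
  apply (refuted_unchanged _ (mkSeq R ((x, A) :: G0) z C)); simpl; auto.
  apply sat_ctx_cons; split; [destruct HA as [-> | ->] |]; assumption.
Qed.

Lemma andR_case R G x A B :
  countermodel M I (mkSeq R G x (FAnd A B)) ->
  premiss_refuted (mkSeq R G x (FAnd A B)) [mkSeq R G x A; mkSeq R G x B].
Proof.
  intros [HI [HG Hn]]. destruct (classic (sat M (I x) A)) as [HA | HnA].
  - apply (refuted_unchanged _ (mkSeq R G x B)); simpl in *; auto.
  - apply (refuted_unchanged _ (mkSeq R G x A)); simpl; auto.
Qed.

Lemma orL_case R G G0 x A B z C :
  Permutation G ((x, FOr A B) :: G0) -> countermodel M I (mkSeq R G z C) ->
  premiss_refuted (mkSeq R G z C) [mkSeq R ((x, A) :: G0) z C; mkSeq R ((x, B) :: G0) z C].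
Proof.
  intros Hp [HI [HG Hn]]. apply (sat_ctx_perm M I _ _ Hp), sat_ctx_cons in HG as [[HA | HB] HG0].
  - apply (refuted_unchanged _ (mkSeq R ((x, A) :: G0) z C)); simpl; auto.
    apply sat_ctx_cons; auto.
  - apply (refuted_unchanged _ (mkSeq R ((x, B) :: G0) z C)); simpl; auto.
    apply sat_ctx_cons; auto.
Qed.

Lemma orR_case R G x A0 A1 A :
  A = A0 \/ A = A1 -> countermodel M I (mkSeq R G x (FOr A0 A1)) ->
  premiss_refuted (mkSeq R G x (FOr A0 A1)) [mkSeq R G x A].
Proof.
  intros HA [HI [HG Hn]]. apply (refuted_unchanged _ (mkSeq R G x A)); simpl in *; auto.
  destruct HA as [-> | ->]; auto.
Qed.

Lemma diaR_case R G x y A :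
  In (x, y) R -> countermodel M I (mkSeq R G x (FDia A)) ->
  premiss_refuted (mkSeq R G x (FDia A)) [mkSeq R G y A].
Proof.
  intros Hxy [HI [HG Hn]]. apply (refuted_unchanged _ (mkSeq R G y A)); simpl in *; auto.
  intro HA; apply Hn; exists (I y); split; [exact (HI _ _ Hxy) | exact HA].
Qed.

Lemma boxL_case R G G0 x y A z C :
  In (x, y) R -> Permutation G ((x, FBox A) :: G0) -> countermodel M I (mkSeq R G z C) ->
  premiss_refuted (mkSeq R G z C) [mkSeq R ((y, A) :: G0) z C].
Proof.
  intros Hxy Hp [HI [HG Hn]]. apply (sat_ctx_perm M I _ _ Hp), sat_ctx_cons in HG as [HA HG0].
  apply (refuted_unchanged _ (mkSeq R ((y, A) :: G0) z C)); simpl; auto.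
  apply sat_ctx_cons; split; [exact (HA _ _ (le_refl M _) (HI _ _ Hxy)) | exact HG0].
Qed.

Lemma tr_case R G x y w z C :
  (forall a b c, Rm M a b -> Rm M b c -> Rm M a c) ->
  In (x, y) R -> In (y, w) R -> countermodel M I (mkSeq R G z C) ->
  premiss_refuted (mkSeq R G z C) [mkSeq ((x, w) :: R) G z C].
Proof.
  intros Htr Hxy Hyw [HI [HG Hn]].
  apply (refuted_unchanged _ (mkSeq ((x, w) :: R) G z C)); simpl; auto.
  intros a b [E | Hab]; [injection E as <- <- | exact (HI _ _ Hab)].
  exact (Htr _ _ _ (HI _ _ Hxy) (HI _ _ Hyw)).
Qed.

(* Diamond-left: the fresh label is sent to a witness of the diamond. *)
Lemma diaL_case R G G0 x y A z C :
  Permutation G ((x, FDia A) :: G0) -> fresh y (mkSeq R G z C) ->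
  countermodel M I (mkSeq R G z C) ->
  premiss_refuted (mkSeq R G z C) [mkSeq ((x, y) :: R) ((y, A) :: G0) z C].
Proof.
  intros Hp Hy [HI [HG Hn]].
  assert (HxG : In (x, FDia A) G)
    by (apply (Permutation_in _ (Permutation_sym Hp)); left; reflexivity).
  assert (Hx : in_var (mkSeq R G z C) x) by (right; left; exists (FDia A); exact HxG).
  destruct (HG _ _ HxG) as [v [Hv HA]].
  pose proof (sat_ctx_update_fresh M I y v _ Hy HG) as HGv.
  apply (sat_ctx_perm M _ _ _ Hp), sat_ctx_cons in HGv as [_ HG0].
  exists (mkSeq ((x, y) :: R) ((y, A) :: G0) z C), (update M I y v).
  split; [simpl; auto | split; [split; [| split] |]].
  - exact (interprets_update_fresh M I y v _ x Hy Hx HI Hv).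
  - apply sat_ctx_cons; split; [rewrite update_eq; exact HA | exact HG0].
  - simpl. rewrite (update_fresh M I y v _ z Hy) by (right; right; reflexivity). exact Hn.
  - intros u Hu. rewrite (update_fresh M I y v _ u Hy Hu). apply le_refl.
Qed.

(* Implication-right: move x up to a world refuting the implication. *)
Lemma impR_case R G x A B :
  quasi_tree_like (mkSeq R G x (FImp A B)) -> BIGL M ->
  countermodel M I (mkSeq R G x (FImp A B)) ->
  premiss_refuted (mkSeq R G x (FImp A B)) [mkSeq R ((x, A) :: G) x B].
Proof.
  intros Hq HB [HI [HG Hn]].
  destruct (refute_imp M _ _ _ Hn) as [w' [Hw [HA HnB]]].
  destruct (lift_quasi_tree_like M _ I w' Hq HB HI Hw) as [I' [Hle [Hx HI']]]; simpl in Hx.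
  exists (mkSeq R ((x, A) :: G) x B), I'.
  split; [simpl; auto | split; [split; [exact HI' | split] | intros; apply Hle]].
  - apply sat_ctx_cons; split; [rewrite Hx; exact HA | exact (sat_ctx_persist M I I' G Hle HG)].
  - simpl; rewrite Hx; exact HnB.
Qed.

(* Box-right: move x up to a world with a successor refuting A, and send the
   fresh label to that successor. *)
Lemma boxR_case R G x y A :
  quasi_tree_like (mkSeq R G x (FBox A)) -> BIGL M -> fresh y (mkSeq R G x (FBox A)) ->
  countermodel M I (mkSeq R G x (FBox A)) ->
  premiss_refuted (mkSeq R G x (FBox A)) [mkSeq ((x, y) :: R) G y A].
Proof.
  intros Hq HB Hy [HI [HG Hn]].
  destruct (refute_box M _ _ Hn) as [w' [v [Hw [Hv HnA]]]].
  destruct (lift_quasi_tree_like M _ I w' Hq HB HI Hw) as [I1 [Hle [Hx HI1]]]; simpl in Hx.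
  exists (mkSeq ((x, y) :: R) G y A), (update M I1 y v).
  split; [simpl; auto | split; [split; [| split] |]].
  - apply (interprets_update_fresh M I1 y v _ x Hy (or_intror (or_intror eq_refl)) HI1).
    rewrite Hx; exact Hv.
  - exact (sat_ctx_update_fresh M I1 y v _ Hy (sat_ctx_persist M I I1 G Hle HG)).
  - simpl; rewrite update_eq; exact HnA.
  - intros u Hu. rewrite (update_fresh M I1 y v _ u Hy Hu). apply Hle.
Qed.

End RuleCases.

Lemma rule_refuted_premiss (M : model) (I : nat -> W M) S prems :
  quasi_tree_like S -> BIGL M -> countermodel M I S -> labIK4_rule prems S ->
  premiss_refuted M I S prems.
Proof.
  intros Hq HB Hcm Hr. destruct Hr.
  - destruct (id_valid M I _ _ _ _ H Hcm).
  - destruct (botL_valid M I _ _ _ _ _ _ H Hcm).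
  - exact (cut_case M I _ _ _ _ _ _ _ _ H Hcm).
  - exact (wL_case M I _ _ _ _ _ _ _ H Hcm).
  - exact (cL_case M I _ _ _ _ _ _ _ H Hcm).
  - exact (impL_case M I _ _ _ _ _ _ _ _ _ H Hcm).
  - exact (impR_case M I _ _ _ _ _ Hq HB Hcm).
  - exact (andL_case M I _ _ _ _ _ _ _ _ _ H (or_introl eq_refl) Hcm).
  - exact (andL_case M I _ _ _ _ _ _ _ _ _ H (or_intror eq_refl) Hcm).
  - exact (andR_case M I _ _ _ _ _ Hcm).
  - exact (orL_case M I _ _ _ _ _ _ _ _ H Hcm).
  - exact (orR_case M I _ _ _ _ _ _ (or_introl eq_refl) Hcm).
  - exact (orR_case M I _ _ _ _ _ _ (or_intror eq_refl) Hcm).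
  - exact (diaL_case M I _ _ _ _ _ _ _ _ H H0 Hcm).
  - exact (diaR_case M I _ _ _ _ _ H Hcm).
  - exact (boxR_case M I _ _ _ _ _ Hq HB H Hcm).
  - exact (boxL_case M I _ _ _ _ _ _ _ _ H H0 Hcm).
  - exact (tr_case M I _ _ _ _ _ _ _ (proj1 HB) H H0 Hcm).
Qed.

Theorem mainTheorem5 :
  forall (S : sequent) (M : model) (I : nat -> W M),
    quasi_tree_like S ->
    BIGL M ->
    interpretation M S I ->
    ~ sat_seq M I S ->
    forall prems : list sequent,
      labIK4_rule prems S ->
      exists S' (I' : nat -> W M),
        In S' prems /\
        interpretation M S' I' /\
        ~ sat_seq M I' S' /\
        (forall z, in_var S z -> le M (I z) (I' z)).
Proof.
  intros S M I Hq HB HI Hn prems Hr.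
  destruct (rule_refuted_premiss M I S prems Hq HB (countermodel_of_refutation M I S HI Hn) Hr)
    as [S' [I' [Hin [[HI' [HG' Hn']] Hle]]]].
  exists S', I'; split; [exact Hin | split; [exact HI' | split; [| exact Hle]]].
  intro Hsat; exact (Hn' (Hsat HG')).
Qed.
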